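(* Let $b\ge1$, $0\le r\le b$ and $k$ be integers with $k\ge\frac{15}{2}\ln b+16$. Let $\Omega'$ be a probability distribution on the set of functions $[r]\to[b]$ such that for every $I\subseteq[r]$ with $|I|\le k$ and every $x:I\to[b]$, $\Pr_{\omega\sim\Omega'}\big(\bigwedge_{i\in I}\omega(i)=x(i)\big)=b^{-|I|}$. Let $X'(\omega):=|\omega([r])|$ and $\rho(r):=b(1-(1-b^{-1})^r)$. Then \[ \Pr_{\omega\sim\Omega'}\big(|X'(\omega)-\rho(r)|>9\,b^{-1/2}r\big)\le 2^{-6}. \]
   Context: $[N]:=\{0,\dots,N-1\}$; $\omega([r])$ is the image of $\omega$. *)

From mathcomp Require Import all_boot all_order all_algebra.
From mathcomp Require Import reals exp.
Set Implicit Arguments. Unset Strict Implicit. Unset Printing Implicit Defensive.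
Import Order.TTheory GRing.Theory Num.Theory.
Local Open Scope ring_scope.

Definition is_distr (R : realType) (r b : nat)
  (P : {ffun 'I_r -> 'I_b} -> R) : Prop :=
  (forall w, 0 <= P w) /\ \sum_w P w = 1.

Definition prob (R : realType) (r b : nat)
  (P : {ffun 'I_r -> 'I_b} -> R) (A : pred {ffun 'I_r -> 'I_b}) : R :=
  \sum_(w | A w) P w.

(* The assignment x : I -> [b] is
   given as a function on [r] of which only the values on I matter. *)
Definition kwise_uniform (R : realType) (r b k : nat)
  (P : {ffun 'I_r -> 'I_b} -> R) : Prop :=
  forall (I : {set 'I_r}) (x : 'I_r -> 'I_b), (#|I| <= k)%N ->
    prob P [pred w : {ffun 'I_r -> 'I_b} | [forall i in I, w i == x i]] = (b%:R ^- #|I|).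

Definition image_size (r b : nat) (w : {ffun 'I_r -> 'I_b}) : nat :=
  #|[set w i | i : 'I_r]|.

Definition rho (R : realType) (b r : nat) : R :=
  b%:R * (1 - (1 - b%:R^-1) ^+ r).

From mathcomp Require Import all_boot all_order all_algebra.
From mathcomp Require Import reals sequences exp ring lra zify.
Set Implicit Arguments. Unset Strict Implicit. Unset Printing Implicit Defensive.
Import Order.TTheory GRing.Theory Num.Theory.
Local Open Scope ring_scope.

(* Write X' = b - M, where M w = \sum_y [w avoids y] counts the values missed by w.
   By inclusion-exclusion [w avoids S] = \sum_t (-1)^t C(N_S w, t), N_S w being the number
   of positions sent into S, and cutting this sum after k terms errs by at most C(N_S w, k).
   The expectation of C(N_S w, t) only involves t-wise marginals, so for t <= k it takes its
   fully independent value C(r, t) (|S|/b)^t, and the neglected binomial terms are at most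
   2^k/k!.  Hence the first two moments of M are those of r independent uniform balls in b
   bins up to O(r 2^k / k!), giving E (X' - rho r)^2 <= r(r-1)/b + 3 b^2 (r+2) 2^k/k!.
   Chebyshev's inequality concludes, since k >= 15/2 ln b + 16 forces 36 b^4 2^k <= k!. *)

Section PowerDifferences.
Variable R : realDomainType.
Implicit Types x y : R.

Lemma subrXX_ge x y n : 0 <= y -> y <= x ->
  n.+1%:R * y ^+ n * (x - y) <= x ^+ n.+1 - y ^+ n.+1.
Proof.
move=> y_ge0 le_yx; elim: n => [|n IHn]; first by rewrite expr0 !expr1 mulr1 mul1r.
have -> : x ^+ n.+2 - y ^+ n.+2 = x * (x ^+ n.+1 - y ^+ n.+1) + y ^+ n.+1 * (x - y).
  by rewrite !exprS; ring.
have -> : n.+2%:R * y ^+ n.+1 * (x - y)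
    = y * (n.+1%:R * y ^+ n * (x - y)) + y ^+ n.+1 * (x - y).
  by rewrite exprS -[n.+2]addn1 natrD; ring.
have lhs_ge0 : 0 <= n.+1%:R * y ^+ n * (x - y) by rewrite !mulr_ge0 ?exprn_ge0 ?subr_ge0.
have := ler_wpM2r lhs_ge0 le_yx.
have := ler_wpM2l (le_trans y_ge0 le_yx) IHn.
lra.
Qed.

Lemma subrXX_le x y n : 0 <= y -> y <= x -> x <= 1 ->
  x ^+ n - y ^+ n <= n%:R * (x - y).
Proof.
move=> y_ge0 le_yx le_x1; elim: n => [|n IHn]; first by rewrite !expr0 subrr mul0r.
have -> : x ^+ n.+1 - y ^+ n.+1 = x * (x ^+ n - y ^+ n) + y ^+ n * (x - y).
  by rewrite !exprS; ring.
have x_ge0 : 0 <= x := le_trans y_ge0 le_yx.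
have yn_le1 : y ^+ n <= 1 by rewrite exprn_ile1 // (le_trans le_yx).
have Xn_ge0 : 0 <= x ^+ n - y ^+ n by rewrite subr_ge0 lerXn2r ?nnegrE.
have xy_ge0 : 0 <= x - y by rewrite subr_ge0.
have := ler_wpM2r Xn_ge0 le_x1.
have := ler_wpM2r xy_ge0 yn_le1.
rewrite -natr1; lra.
Qed.

End PowerDifferences.

Lemma empty_bins_var_poly_le (R : realDomainType) (p : R) n : 0 <= p -> 2 * p <= 1 ->
  p * (1 - p) ^+ n.+1 + (1 - p) * (1 - 2 * p) ^+ n.+1 - ((1 - p) ^+ n.+1) ^+ 2
  <= n.+1%:R * n%:R * p ^+ 3.
Proof.
move=> p_ge0 le_2p1.
set a := 1 - p; set c := 1 - 2 * p; set A := a ^+ n; set C := c ^+ n.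
have a_ge0 : 0 <= a by rewrite /a; lra.
have c_ge0 : 0 <= c by rewrite /c; lra.
have A_ge0 : 0 <= A := exprn_ge0 n a_ge0.
have C_ge0 : 0 <= C := exprn_ge0 n c_ge0.
have le_a1 : a <= 1 by rewrite /a; lra.
have le_ca : c <= a by rewrite /a /c; lra.
have le_ca2 : c <= a ^+ 2 by rewrite /a /c; nra.
have aA_ge : 1 - a * A <= n.+1%:R * p.
  by have := subrXX_le n.+1 a_ge0 le_a1 (lexx 1); rewrite expr1n exprS /a subKr.
have aA2_ge : n.+1%:R * C * p ^+ 2 <= (a * A) ^+ 2 - c * C.
  have e1 : a ^+ 2 - c = p ^+ 2 by rewrite /a /c; ring.
  have e2 : (a ^+ 2) ^+ n.+1 = (a * A) ^+ 2 by rewrite /A -exprS -!exprM mulnC.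
  by have := subrXX_ge n c_ge0 le_ca2; rewrite (exprS c) -/C e1 e2.
have AC_le : A - C <= n%:R * p.
  have e : a - c = p by rewrite /a /c; ring.
  by have := subrXX_le n c_ge0 le_ca le_a1; rewrite e.
have paA_ge0 : 0 <= p * a * A by rewrite !mulr_ge0.
have p1_ge0 : 0 <= 1 - p by lra.
have np2a_ge0 : 0 <= n.+1%:R * p ^+ 2 * a by rewrite !mulr_ge0 ?exprn_ge0.
have np3_ge0 : 0 <= n.+1%:R * p ^+ 2 * (n%:R * p) by rewrite !mulr_ge0 ?exprn_ge0.
rewrite exprS -/A (exprS c) -/C.
have -> : p * (a * A) + (1 - p) * (c * C) - (a * A) ^+ 2
   = p * a * A * (1 - a * A) - (1 - p) * ((a * A) ^+ 2 - c * C) by ring.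
have : p * a * A * (n.+1%:R * p) - (1 - p) * (n.+1%:R * C * p ^+ 2)
   = n.+1%:R * p ^+ 2 * a * (A - C) by rewrite /a; ring.
have := ler_wpM2l paA_ge0 aA_ge.
have := ler_wpM2l p1_ge0 aA2_ge.
have := ler_wpM2l np2a_ge0 AC_le.
have := ler_wpM2r np3_ge0 le_a1.
rewrite mul1r; lra.
Qed.

(* The left-hand side is the variance of the number of empty bins when r balls are thrown
   independently and uniformly into b bins. *)
Lemma empty_bins_var_le (R : realFieldType) (b r : nat) : (1 <= b)%N ->
  b%:R * (1 - (b%:R : R)^-1) ^+ r + b%:R * (b%:R - 1) * (1 - 2 * (b%:R : R)^-1) ^+ r
    - b%:R ^+ 2 * ((1 - (b%:R : R)^-1) ^+ r) ^+ 2
  <= r%:R * (r%:R - 1) / b%:R.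
Proof.
move=> b_gt0.
case: r => [|n].
  rewrite !expr0 expr1n !mulr1 !mul0r.
  by have -> : b%:R + b%:R * (b%:R - 1) - b%:R ^+ 2 = 0 :> R by ring.
rewrite -[n.+1%:R]natr1 addrK.
case: b b_gt0 => [|[|b]] // _.
  rewrite invr1 (subrr (1 : R)) expr0n /= !mul1r !mul0r expr0n /= mulr0 !addr0 subr0 mulr1.
  by rewrite mulr_ge0 ?addr_ge0 ?ler0n.
set bR := b.+2%:R; set p := bR^-1.
have bR_gt0 : 0 < bR by rewrite ltr0n.
have p_ge0 : 0 <= p by rewrite invr_ge0 ltW.
have le_2p1 : 2 * p <= 1.
  by rewrite ler_pdivrMr // mul1r /bR -addn2 natrD; have := ler0n R b; lra.
have -> : bR * (1 - p) ^+ n.+1 + bR * (bR - 1) * (1 - 2 * p) ^+ n.+1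
    - bR ^+ 2 * ((1 - p) ^+ n.+1) ^+ 2
  = bR ^+ 2 * (p * (1 - p) ^+ n.+1 + (1 - p) * (1 - 2 * p) ^+ n.+1 - ((1 - p) ^+ n.+1) ^+ 2).
  by rewrite /p; field; rewrite -natrD pnatr_eq0.
have -> : (n%:R + 1) * n%:R / bR = bR ^+ 2 * (n.+1%:R * n%:R * p ^+ 3).
  by rewrite /p -natr1; field; rewrite -natrD pnatr_eq0.
by rewrite ler_pM2l ?exprn_gt0 //; apply: empty_bins_var_poly_le.
Qed.

Lemma sum_alt_binS (R : comPzRingType) n m :
  \sum_(t < m.+1) (-1) ^+ t * 'C(n.+1, t)%:R = (-1) ^+ m * 'C(n, m)%:R :> R.
Proof.
elim: m => [|m IHm]; first by rewrite big_ord1 !expr0 !bin0.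
by rewrite big_ord_recr /= IHm binS natrD exprS; ring.
Qed.

Lemma alt_bin_trunc_le (R : numDomainType) (N m : nat) :
  `|(N == 0)%:R - \sum_(t < m) (-1) ^+ t * 'C(N, t)%:R| <= 'C(N, m)%:R :> R.
Proof.
case: N => [|n] /=.
  case: m => [|m]; first by rewrite big_ord0 subr0 normr1 bin0.
  rewrite big_ord_recl /= expr0 bin0 mul1r big1 ?addr0 ?subrr ?normr0 // => i _.
  by rewrite bin0n mulr0.
case: m => [|m]; first by rewrite big_ord0 subrr normr0 ler0n.
rewrite sum_alt_binS sub0r normrN normrM normrX normrN normr1 expr1n mul1r ger0_norm //.
by rewrite ler_nat binS leq_addl.
Qed.

Lemma binomial_trunc_le (R : realDomainType) (x e : R) (r m : nat) : 0 <= x -> 0 <= e ->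
  (forall t, (m <= t)%N -> 'C(r, t)%:R * x ^+ t <= e) ->
  `|\sum_(t < m) (-1) ^+ t * 'C(r, t)%:R * x ^+ t - (1 - x) ^+ r| <= r.+1%:R * e.
Proof.
move=> x_ge0 e_ge0 tail_le.
pose g t := (-1) ^+ t * 'C(r, t)%:R * x ^+ t.
have -> : (1 - x) ^+ r = \sum_(t < r.+1) g t.
  rewrite exprDn; apply: eq_bigr => t _.
  by rewrite expr1n mul1r /g -mulr_natl (exprNn x); ring.
pose N := (m + r.+1)%N.
rewrite (big_ord_widen N g (leq_addr _ _)) (big_ord_widen N g (leq_addl _ _)).
rewrite [X in _ - X](bigID (fun t : 'I_N => (t < m)%N)) /=.
have -> : \sum_(i < N | (i < r.+1)%N && (i < m)%N) g i = \sum_(i < N | (i < m)%N) g i.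
  rewrite [RHS](bigID (fun t : 'I_N => (t < r.+1)%N)) /= [X in _ = _ + X]big1 ?addr0.
    by apply: eq_bigl => i; rewrite andbC.
  by move=> i /andP[_]; rewrite -leqNgt => r_lt_i; rewrite /g bin_small // mulr0 mul0r.
rewrite opprD addrA subrr add0r normrN.
apply: le_trans (ler_norm_sum _ _ _) _.
apply: (@le_trans _ _ (\sum_(i < N | (i < r.+1)%N) e)).
  rewrite [X in _ <= X]big_mkcond [X in X <= _]big_mkcond /=.
  apply: ler_sum => i _; case: ifP => [/andP[-> i_ge_m] | _]; last by case: ifP.
  rewrite /g !normrM normrX normrN normr1 expr1n mul1r ger0_norm // ger0_norm ?exprn_ge0 //.
  by rewrite tail_le // leqNgt.
by rewrite -(big_ord_widen N (fun=> e) (leq_addl _ _)) sumr_const card_ord mulr_natl.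
Qed.

Lemma exp2_mul_fact_le k t : (1 <= k <= t)%N -> (2 ^ t * k`! <= 2 ^ k * t`!)%N.
Proof.
case/andP=> k_gt0; elim: t => [|t IHt]; first by rewrite leqn0 => /eqP k0; rewrite k0 in k_gt0.
rewrite leq_eqVlt => /orP[/eqP <- // | le_kt].
have := IHt le_kt; rewrite expnS factS; nia.
Qed.

Lemma ffact_le_expn n m : (n ^_ m <= n ^ m)%N.
Proof.
rewrite ffact_prod (leq_trans (leq_prod (E2 := fun=> n) _)) ?prod_nat_const ?card_ord //.
by move=> i _; exact: leq_subr.
Qed.

Lemma bin_exp_mul_fact_le r b k t s : (r <= b)%N -> (s <= 2)%N -> (1 <= k <= t)%N ->
  ('C(r, t) * s ^ t * k`! <= 2 ^ k * b ^ t)%N.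
Proof.
move=> le_rb le_s2 le_1kt; have /andP[k_gt0 le_kt] := le_1kt.
have t_gt0 : (0 < t)%N := leq_trans k_gt0 le_kt.
have binF_le : ('C(r, t) * t`! <= b ^ t)%N.
  by rewrite bin_ffact (leq_trans (ffact_le_expn _ _)) // leq_exp2r.
have expF_le : (s ^ t * k`! <= 2 ^ k * t`!)%N.
  by rewrite (leq_trans _ (exp2_mul_fact_le le_1kt)) // leq_mul2r leq_exp2r // le_s2 orbT.
rewrite -(@leq_pmul2r t`!) ?fact_gt0 //.
have -> : ('C(r, t) * s ^ t * k`! * t`! = 'C(r, t) * t`! * (s ^ t * k`!))%N by ring.
have -> : (2 ^ k * b ^ t * t`! = b ^ t * (2 ^ k * t`!))%N by ring.
exact: leq_mul.
Qed.

Lemma bin_tail_term_le (R : realFieldType) r b k t s : (1 <= b)%N -> (r <= b)%N ->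
  (s <= 2)%N -> (1 <= k <= t)%N ->
  'C(r, t)%:R * ((s%:R : R) / b%:R) ^+ t <= (2 ^ k)%:R / k`!%:R.
Proof.
move=> b_gt0 le_rb le_s2 le_1kt.
have bt_gt0 : (0 : R) < (b ^ t)%:R by rewrite ltr0n expn_gt0 b_gt0.
have kf_gt0 : (0 : R) < k`!%:R by rewrite ltr0n fact_gt0.
rewrite expr_div_n mulrA ler_pdivrMr -?natrX // mulrAC ler_pdivlMr //.
by rewrite -!natrM ler_nat bin_exp_mul_fact_le.
Qed.

Lemma fact_ge_exp_30_7 (R : realFieldType) k : (16 <= k)%N ->
  36 * (30 / 7 : R) ^+ k <= k`!%:R.
Proof.
move=> k_ge16; rewrite -(subnK k_ge16); elim: (k - 16)%N => [|n IHn].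
  have -> : (16`!)%:R = (16 * 15 * 14 * 13 * 12 * 11 * 10 * 9 * 8 * 7 * 6 * 5 * 4 * 3 * 2 : R).
    by rewrite !factS fact0 !natrM /=; ring.
  rewrite !exprS expr0; lra.
rewrite addSn factS natrM exprS.
have le_30_7 : 30 / 7 <= ((n + 16).+1%:R : R).
  by rewrite -addSn natrD; have := ler0n R n.+1; lra.
have c_ge0 : 0 <= 30 / 7 :> R by lra.
have IH_ge0 : 0 <= 36 * (30 / 7 : R) ^+ (n + 16) by rewrite mulr_ge0 ?exprn_ge0.
by rewrite mulrCA; exact: ler_pM.
Qed.

Lemma expR_8_15_le (R : realType) : expR (8 / 15 : R) <= 15 / 7.
Proof.
have := expR_ge1Dx (- (8 / 15 : R)).
have : expR (8 / 15 : R) * expR (- (8 / 15)) = 1 by rewrite -expRD subrr expR0.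
have := expR_gt0 (8 / 15 : R).
nra.
Qed.

(* b^4 = exp (4 ln b) <= exp (8 k / 15) <= (15/7)^k, and 36 (2 * 15/7)^k <= k! for k >= 16. *)
Lemma pow4_mul_exp2_le_fact (R : realType) (b k : nat) : (1 <= b)%N ->
  15 / 2 * ln (b%:R : R) + 16 <= k%:R -> 36 * (b%:R : R) ^+ 4 * 2 ^+ k <= k`!%:R.
Proof.
move=> b_gt0 k_ge.
have ln_ge0 : 0 <= ln (b%:R : R) by rewrite ln_ge0 // ler1n.
have k_ge16 : (16 <= k)%N by rewrite -(ler_nat R); lra.
have b4_le : (b%:R : R) ^+ 4 <= (15 / 7) ^+ k.
  rewrite -[b%:R]lnK ?posrE ?ltr0n // -expRM_natl.
  apply: (@le_trans _ _ (expR (k%:R * (8 / 15)))); first by rewrite ler_expR; lra.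
  by rewrite expRM_natl lerXn2r ?nnegrE ?expR_ge0 ?expR_8_15_le //; lra.
apply: le_trans (fact_ge_exp_30_7 R k_ge16).
rewrite -mulrA ler_pM2l; last by lra.
rewrite (_ : 30 / 7 = 15 / 7 * 2 :> R); last by lra.
by rewrite exprMn ler_pM2r ?exprn_gt0.
Qed.

Lemma card_agree_pffun_on (r b : nat) (y0 : 'I_b) (J : {set 'I_r}) (S : {set 'I_b})
    (w : {ffun 'I_r -> 'I_b}) :
  #|[pred x in pffun_on y0 J S | [forall i in J, w i == x i]]|
    = [forall i in J, w i \in S] :> nat.
Proof.
case: (boolP [forall i in J, w i \in S]) => [wJS | wJ_notS].
  apply/eqP/card1P; exists [ffun i => if i \in J then w i else y0] => x.
  rewrite !inE; apply/andP/eqP => [[/pffun_onP[supp_x _] /forallP agree] | ->].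
    apply/ffunP => i; rewrite ffunE; case: ifP => iJ.
      by have := agree i; rewrite iJ => /eqP.
    by apply/eqP/negPn/negP => x_i; have := subsetP supp_x i; rewrite inE x_i iJ; move=> /(_ isT).
  split; last by apply/forallP => i; apply/implyP => iJ; rewrite ffunE iJ.
  apply/pffun_onP; split.
    by apply/subsetP => i; rewrite inE ffunE; case: ifP => //; rewrite eqxx.
  move=> _ /imageP[i iJ ->]; rewrite ffunE iJ.
  by move/forallP: wJS => /(_ i); rewrite iJ.
apply: eq_card0 => x; rewrite !inE; apply/negP => /andP[/pffun_onP[_ x_S] /forallP agree].
move/negP: wJ_notS; apply; apply/forallP => i; apply/implyP => iJ.
by have := agree i; rewrite iJ => /eqP ->; apply: x_S; exact: image_f.
Qed.

Section KwiseUniform.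
Variables (R : realType) (r b k : nat) (P : {ffun 'I_r -> 'I_b} -> R).
Hypotheses (P_distr : is_distr P) (P_kwise : kwise_uniform k P).
Hypotheses (b_gt0 : (0 < b)%N) (r_le_b : (r <= b)%N) (k_gt0 : (0 < k)%N).
Local Notation T := {ffun 'I_r -> 'I_b}.

Definition Ex (f : T -> R) : R := \sum_w P w * f w.

Lemma Ex_cst c : Ex (fun=> c) = c.
Proof. by rewrite /Ex -mulr_suml; case: P_distr => _ ->; rewrite mul1r. Qed.

Lemma ExB f g : Ex (fun w => f w - g w) = Ex f - Ex g.
Proof. by rewrite /Ex -sumrB; apply: eq_bigr => w _; rewrite mulrBr. Qed.

Lemma ExZ c f : Ex (fun w => c * f w) = c * Ex f.
Proof. by rewrite /Ex mulr_sumr; apply: eq_bigr => w _; rewrite mulrCA. Qed.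

Lemma Ex_sum (I : finType) (p : pred I) (F : I -> T -> R) :
  Ex (fun w => \sum_(i | p i) F i w) = \sum_(i | p i) Ex (F i).
Proof. by rewrite /Ex; under eq_bigr do rewrite mulr_sumr; rewrite exchange_big. Qed.

Lemma eq_Ex f g : f =1 g -> Ex f = Ex g.
Proof. by move=> fg; apply: eq_bigr => w _; rewrite fg. Qed.

Lemma prob_forall_in (J : {set 'I_r}) (S : {set 'I_b}) : (#|J| <= k)%N ->
  prob P [pred w : T | [forall i in J, w i \in S]] = (#|S|%:R / b%:R) ^+ #|J|.
Proof.
move=> J_le_k; pose y0 : 'I_b := Ordinal b_gt0.
have -> : prob P [pred w : T | [forall i in J, w i \in S]]
    = \sum_(x in pffun_on y0 J S) prob P [pred w : T | [forall i in J, w i == x i]].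
  rewrite /prob (exchange_big_dep xpredT) //= [LHS]big_mkcond /=.
  apply: eq_bigr => w _; rewrite sumr_const (card_agree_pffun_on y0 J S w).
  by case: ifP.
under eq_bigr => x _ do rewrite P_kwise //.
by rewrite sumr_const card_pffun_on -[_ *+ (_ ^ _)%N]mulr_natl natrX exprMn exprVn mulrC.
Qed.

Lemma ler_Ex f g : (forall w, f w <= g w) -> Ex f <= Ex g.
Proof. by case: P_distr => P_ge0 _ fg; apply: ler_sum => w _; rewrite ler_wpM2l. Qed.

Lemma ler_norm_Ex f : `|Ex f| <= Ex (fun w => `|f w|).
Proof.
case: P_distr => P_ge0 _; apply: le_trans (ler_norm_sum _ _ _) _.
by apply: ler_sum => w _; rewrite normrM ger0_norm.
Qed.

Lemma Ex_indicator (A : pred T) : Ex (fun w => if A w then 1 else 0) = prob P A.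
Proof.
rewrite /Ex /prob [RHS]big_mkcond; apply: eq_bigr => w _.
by case: ifP; rewrite ?mulr1 ?mulr0.
Qed.

Definition hits (S : {set 'I_b}) (w : T) : nat := #|[set i | w i \in S]|.

Lemma bin_hits (S : {set 'I_b}) (w : T) t :
  'C(hits S w, t)%:R
    = \sum_(J : {set 'I_r} | #|J| == t) (if [forall i in J, w i \in S] then 1 else 0) :> R.
Proof.
rewrite /hits -cards_draws -sum1_card natr_sum -big_mkcondr /=.
apply: eq_bigl => J; rewrite !inE andbC; congr (_ && _).
apply/subsetP/forallP => [J_sub i | J_in i iJ]; first by apply/implyP => /J_sub; rewrite inE.
by rewrite inE; move/implyP: (J_in i); apply.
Qed.

Lemma Ex_bin_hits (S : {set 'I_b}) t : (t <= k)%N ->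
  Ex (fun w => 'C(hits S w, t)%:R) = 'C(r, t)%:R * (#|S|%:R / b%:R) ^+ t.
Proof.
move=> t_le_k; rewrite (eq_Ex (bin_hits S ^~ t)) Ex_sum.
rewrite (eq_bigr (fun=> (#|S|%:R / b%:R) ^+ t)); last first.
  by move=> J /eqP J_t; rewrite Ex_indicator prob_forall_in J_t.
rewrite sumr_const -[_ ^+ t *+ _]mulr_natl -[in RHS](card_ord r) -card_draws.
by congr (_%:R * _); apply: eq_card => J; rewrite !inE.
Qed.

Definition avoids (S : {set 'I_b}) (w : T) : R := (hits S w == 0)%:R.

Lemma Ex_avoids_approx (S : {set 'I_b}) : (#|S| <= 2)%N ->
  `|Ex (avoids S) - (1 - #|S|%:R / b%:R) ^+ r| <= r.+2%:R * ((2 ^ k)%:R / k`!%:R).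
Proof.
move=> S_le2; set x := #|S|%:R / b%:R; set eps := (2 ^ k)%:R / k`!%:R.
have x_ge0 : 0 <= x by rewrite divr_ge0.
have eps_ge0 : 0 <= eps by rewrite divr_ge0.
have tail_le t : (k <= t)%N -> 'C(r, t)%:R * x ^+ t <= eps.
  by move=> le_kt; rewrite bin_tail_term_le ?k_gt0.
set A := \sum_(t < k) (-1) ^+ t * 'C(r, t)%:R * x ^+ t.
have Ex_trunc : A = Ex (fun w => \sum_(t < k) (-1) ^+ t * 'C(hits S w, t)%:R).
  rewrite Ex_sum; apply: eq_bigr => t _.
  by rewrite ExZ Ex_bin_hits 1?ltnW // mulrA.
have avoids_trunc : `|Ex (avoids S) - A| <= eps.
  rewrite Ex_trunc -ExB; apply: le_trans (ler_norm_Ex _) _.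
  apply: le_trans (ler_Ex (fun w => alt_bin_trunc_le R (hits S w) k)) _.
  by rewrite Ex_bin_hits // tail_le.
have -> : r.+2%:R * eps = eps + r.+1%:R * eps by rewrite -addn1 natrD; ring.
rewrite (_ : _ - _ = (Ex (avoids S) - A) + (A - (1 - x) ^+ r)); last by ring.
by rewrite (le_trans (ler_normD _ _)) // lerD // binomial_trunc_le.
Qed.

Lemma hits1_eq0 (w : T) y : (hits [set y] w == 0) = (y \notin [set w i | i : 'I_r]).
Proof.
rewrite /hits cards_eq0; apply/idP/idP => [/eqP no_hit | y_notin].
  apply/imsetP => -[i _ y_wi].
  have : i \in [set i0 | w i0 \in [set y]] by rewrite !inE y_wi.
  by rewrite no_hit inE.
apply/eqP/setP => i; rewrite !inE; apply/negbTE/eqP => wi_y.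
by move/imsetP: y_notin; apply; exists i; rewrite ?wi_y.
Qed.

Definition missed (w : T) : R := \sum_y avoids [set y] w.

Lemma image_size_missed (w : T) : (image_size w)%:R = b%:R - missed w.
Proof.
have -> : missed w = #|~: [set w i | i : 'I_r]|%:R.
  rewrite -sum1_card natr_sum [RHS]big_mkcond /=; apply: eq_bigr => y _.
  by rewrite /avoids hits1_eq0 !inE; case: ifP.
have := cardsC [set w i | i : 'I_r]; rewrite card_ord => /(congr1 (fun n => n%:R : R)).
by rewrite natrD /image_size => <-; rewrite addrK.
Qed.

Lemma avoidsM (w : T) y y' : avoids [set y] w * avoids [set y'] w = avoids [set y; y'] w.
Proof.
rewrite /avoids /hits !cards_eq0.
have -> : [set i | w i \in [set y; y']] = [set i | w i \in [set y]] :|: [set i | w i \in [set y']].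
  by apply/setP => i; rewrite !inE.
by rewrite setU_eq0; do 2![case: (_ == set0)]; rewrite /= ?mulr1 ?mulr0.
Qed.

Let d : R := r.+2%:R * ((2 ^ k)%:R / k`!%:R).

Lemma Ex_avoids1_approx y : `|Ex (avoids [set y]) - (1 - b%:R^-1) ^+ r| <= d.
Proof. by have := Ex_avoids_approx (S := [set y]); rewrite cards1 div1r; apply. Qed.

Lemma Ex_avoids2_le y y' : y' != y -> Ex (avoids [set y; y']) <= (1 - 2 * b%:R^-1) ^+ r + d.
Proof.
move=> y'_neq_y; have := Ex_avoids_approx (S := [set y; y']).
rewrite cards2 eq_sym y'_neq_y => /(_ isT) /ler_normlP[_].
by rewrite lerBlDr addrC.
Qed.

Lemma Ex_missed_ge : b%:R * ((1 - b%:R^-1) ^+ r - d) <= Ex missed.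
Proof.
set q := _ - d; have -> : b%:R * q = \sum_(y : 'I_b) q by rewrite sumr_const card_ord mulr_natl.
rewrite Ex_sum; apply: ler_sum => y _.
by have /ler_normlP[+ _] := Ex_avoids1_approx y; rewrite /q; lra.
Qed.

Lemma Ex_missed_sqr_le : Ex (fun w => missed w ^+ 2)
  <= b%:R * ((1 - b%:R^-1) ^+ r + d) + b%:R * (b%:R - 1) * ((1 - 2 * b%:R^-1) ^+ r + d).
Proof.
set q1 := (1 - b%:R^-1) ^+ r; set q2 := (1 - 2 * b%:R^-1) ^+ r.
have missed_sqr w : missed w ^+ 2 = \sum_y \sum_y' avoids [set y; y'] w.
  rewrite expr2 /missed mulr_suml; apply: eq_bigr => y _.
  by rewrite mulr_sumr; apply: eq_bigr => y' _; rewrite avoidsM.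
rewrite (eq_Ex missed_sqr) Ex_sum.
have row_le y : \sum_y' Ex (avoids [set y; y']) <= (q1 + d) + (b%:R - 1) * (q2 + d).
  rewrite (bigD1 y) //= setUid lerD //.
    by have /ler_normlP[_] := Ex_avoids1_approx y; rewrite /q1; lra.
  apply: le_trans (ler_sum _ (fun y' => Ex_avoids2_le (y := y) (y' := y'))) _.
  rewrite sumr_const cardC1 card_ord -[b in b%:R - 1](prednK b_gt0) -[b.-1.+1%:R]natr1.
  by rewrite addrK [X in _ <= X]mulr_natl.
under eq_bigr do rewrite Ex_sum.
apply: le_trans (ler_sum _ (fun y _ => row_le y)) _.
by rewrite sumr_const card_ord -mulr_natl; lra.
Qed.

Lemma Ex_sqr_subr f c :
  Ex (fun w => (f w - c) ^+ 2) = Ex (fun w => f w ^+ 2) - 2 * c * Ex f + c ^+ 2.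
Proof.
rewrite -[c ^+ 2 in RHS]Ex_cst /Ex mulr_sumr -sumrB -big_split /=.
by apply: eq_bigr => w _; ring.
Qed.

Lemma Ex_image_size_dev_sqr_le :
  Ex (fun w => ((image_size w)%:R - rho R b r) ^+ 2)
    <= r%:R * (r%:R - 1) / b%:R + 3 * b%:R ^+ 2 * d.
Proof.
pose q1 : R := (1 - b%:R^-1) ^+ r.
have q1_ge0 : 0 <= q1 by rewrite exprn_ge0 // subr_ge0 invf_le1 ?ler1n ?ltr0n.
have q1_le1 : q1 <= 1.
  by rewrite exprn_ile1 // ?subr_ge0 ?invf_le1 ?ler1n ?ltr0n // gerBl invr_ge0.
have d_ge0 : 0 <= d by rewrite mulr_ge0 ?divr_ge0.
have b_ge0 : 0 <= b%:R :> R by rewrite ler0n.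
have bq1_ge0 : 0 <= 2 * (b%:R * q1) by rewrite !mulr_ge0.
rewrite (eq_Ex (g := fun w => (missed w - b%:R * q1) ^+ 2)); last first.
  by move=> w; rewrite image_size_missed /rho -sqrrN /q1; congr (_ ^+ 2); ring.
rewrite Ex_sqr_subr.
have := Ex_missed_sqr_le; have := empty_bins_var_le R r b_gt0.
have := ler_wpM2l bq1_ge0 Ex_missed_ge.
have := ler_wpM2r d_ge0 (ler_wpM2l (exprn_ge0 2 b_ge0) q1_le1).
rewrite -/q1; lra.
Qed.

End KwiseUniform.

Lemma prob_abs_gt_le (R : realType) (r b : nat) (P : {ffun 'I_r -> 'I_b} -> R)
    (X : {ffun 'I_r -> 'I_b} -> R) (t : R) : is_distr P -> 0 < t ->
  prob P [pred w | t < `|X w|] <= Ex P (fun w => X w ^+ 2) / t ^+ 2.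
Proof.
move=> [P_ge0 _] t_gt0; rewrite /prob /Ex mulr_suml.
apply: (@le_trans _ _ (\sum_(w | t < `|X w|) (P w * X w ^+ 2 / t ^+ 2))).
  apply: ler_sum => w /= t_lt_X.
  rewrite -mulrA -[X in X <= _]mulr1 ler_wpM2l // ler_pdivlMr ?exprn_gt0 // mul1r.
  by rewrite -(real_normK (num_real (X w))) lerXn2r ?nnegrE ?ltW // (lt_trans t_gt0).
rewrite [X in X <= _]big_mkcond /=; apply: ler_sum => w _; case: ifP => // _.
by rewrite divr_ge0 ?sqr_ge0 // mulr_ge0 ?sqr_ge0.
Qed.

Lemma deviation_budget_le (R : realFieldType) (b r e : R) :
  1 <= b -> 1 <= r -> 0 <= e -> 36 * b ^+ 4 * e <= 1 ->
  r * (r - 1) / b + 3 * b ^+ 2 * ((r + 2) * e) <= 2 ^- 6 * (81 * r ^+ 2 / b).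
Proof.
move=> b_ge1 r_ge1 e_ge0 small_e.
have b_gt0 : 0 < b by lra.
have u_le : 36 * (b ^+ 3 * e) <= 1.
  have ue_ge0 : 0 <= 36 * (b ^+ 3 * e) by rewrite !mulr_ge0 ?exprn_ge0 //; lra.
  by have := ler_wpM2l ue_ge0 b_ge1; move: small_e; rewrite (exprS b 3); lra.
have -> : r * (r - 1) / b + 3 * b ^+ 2 * ((r + 2) * e)
    = (r * (r - 1) + 3 * (r + 2) * (b ^+ 3 * e)) / b by field; rewrite gt_eqF.
have -> : 2 ^- 6 * (81 * r ^+ 2 / b) = (81 / 64 * r ^+ 2) / b by field; rewrite gt_eqF.
rewrite ler_pM2r ?invr_gt0 //.
have r2_ge0 : 0 <= r + 2 by lra.
by have := ler_wpM2l r2_ge0 u_le; rewrite mulr1; nra.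
Qed.

Theorem lemma20 (R : realType) (b r k : nat)
  (P : {ffun 'I_r -> 'I_b} -> R) :
  (1 <= b)%N -> (r <= b)%N ->
  (15 / 2 * ln (b%:R : R) + 16 <= k%:R) ->
  is_distr P -> kwise_uniform k P ->
  prob P [pred w : {ffun 'I_r -> 'I_b} | 9 * (Num.sqrt (b%:R : R))^-1 * r%:R
                   < `|(image_size w)%:R - rho R b r| ]
  <= 2 ^- 6.
Proof.
move=> b_gt0 r_le_b k_ge P_distr P_kwise.
have ln_b_ge0 : 0 <= ln (b%:R : R) by rewrite ln_ge0 // ler1n.
have k_gt0 : (0 < k)%N by rewrite -(ltr_nat R); lra.
case: r => [|r] in r_le_b P P_distr P_kwise *.
  rewrite /prob big_pred0 ?invr_ge0 ?exprn_ge0 // => w /=.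
  rewrite mulr0 /rho expr0 subrr mulr0 subr0 /image_size.
  have -> : [set w i | i : 'I_0] = set0 by apply/setP => y; rewrite inE; apply/imsetP => -[[]].
  by rewrite cards0 normr0 ltxx.
set t := 9 * (Num.sqrt (b%:R : R))^-1 * r.+1%:R.
have b_ge1 : 1 <= b%:R :> R by rewrite ler1n.
have t_gt0 : 0 < t by rewrite !mulr_gt0 ?invr_gt0 ?sqrtr_gt0 ?ltr0n.
have t2 : t ^+ 2 = 81 * r.+1%:R ^+ 2 / b%:R.
  by rewrite /t !exprMn exprVn sqr_sqrtr ?ler0n //; ring.
apply: le_trans (prob_abs_gt_le _ P_distr t_gt0) _.
rewrite ler_pdivrMr ?exprn_gt0 // t2.
apply: le_trans (Ex_image_size_dev_sqr_le P_distr P_kwise b_gt0 r_le_b k_gt0) _.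
rewrite -[r.+3]addn2 natrD.
apply: deviation_budget_le; rewrite ?ler1n ?divr_ge0 //.
by rewrite mulrA ler_pdivrMr ?ltr0n ?fact_gt0 // mul1r natrX pow4_mul_exp2_le_fact.
Qed.
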